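(* Let $n \ge 1$, let $f \in \mathbb{C}^n$ be a unit vector ($\|f\|_2 = 1$), and let $H, H' \in \mathbb{C}^{n\times n}$ be Hermitian matrices. Then \[ W_1\big(\mu_f^{H}, \mu_f^{H'}\big) \le n\,\|H - H'\|_2 . \]
   Context: For a Hermitian matrix $H \in \mathbb{C}^{n\times n}$, let $\mathrm{spec}(H)$ be its set of distinct eigenvalues and, for $\lambda \in \mathrm{spec}(H)$, let $P_\lambda$ be the orthogonal projection onto the $\lambda$-eigenspace. For a unit vector $f\in\mathbb{C}^n$, the power spectrum of $f$ with respect to $H$ is the discrete probability measure on $\mathbb{R}$ \[ \mu_f^H = \sum_{\lambda \in \mathrm{spec}(H)} \langle f, P_\lambda f\rangle\, \delta_\lambda \] (equivalently $\sum_{i=1}^n |\langle \phi_i, f\rangle|^2 \delta_{\lambda_i}$ for any orthonormal eigenbasis $\phi_i$ with eigenvalues $\lambda_i$). $W_1$ denotes the 1-Wasserstein distance between probability measures on $\mathbb{R}$ (with cost $|s-t|$), and $\|\cdot\|_2$ is the operator (spectral) norm. *)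

From HB Require Import structures.
From mathcomp Require Import all_boot all_order all_algebra.
From mathcomp Require Import all_classical all_reals all_analysis.
From mathcomp.real_closed Require Import complex.

Set Implicit Arguments.
Unset Strict Implicit.
Unset Printing Implicit Defensive.

Import Order.TTheory GRing.Theory Num.Theory.
Local Open Scope ring_scope.
Local Open Scope classical_set_scope.

Section Defs.
Variable R : realType.
Local Notation C := R[i].

Definition cmod2 (z : C) : R := complex.Re z ^+ 2 + complex.Im z ^+ 2.

Definition vnorm {n : nat} (v : 'cV[C]_n) : R :=
  Num.sqrt (\sum_(k < n) cmod2 (v k 0)).

Definition cdot {n : nat} (u v : 'cV[C]_n) : C :=
  \sum_(k < n) (u k 0)^* * v k 0.

Definition opnorm {n : nat} (A : 'M[C]_n) : R :=
  sup [set vnorm (A *m v) | v in [set v : 'cV[C]_n | vnorm v = 1]].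

Definition orthonormal_eigenbasis {n : nat} (H : 'M[C]_n)
    (phi : 'I_n -> 'cV[C]_n) (lam : 'I_n -> R) : Prop :=
  (forall i j : 'I_n, cdot (phi i) (phi j) = (i == j)%:R) /\
  (forall i : 'I_n, H *m phi i = Complex (lam i) 0 *: phi i).

Definition power_spectrum {n : nat} (f : 'cV[C]_n)
    (phi : 'I_n -> 'cV[C]_n) (lam : 'I_n -> R) : set R -> \bar R :=
  fun A => (\sum_(i < n) (cmod2 (cdot (phi i) f))%:E * \d_(lam i) A)%E.

Definition coupling (mu nu : set R -> \bar R) (P : probability (R * R)%type R)
    : Prop :=
  forall A : set R, measurable A ->
    P (fst @^-1` A) = mu A /\ P (snd @^-1` A) = nu A.

Definition W1 (mu nu : set R -> \bar R) : \bar R :=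
  ereal_inf [set (\int[P]_z (`|z.1 - z.2|)%:E)%E
            | P in [set P : probability (R * R)%type R | coupling mu nu P]].

End Defs.

(* Write a_i = <phi_i, f> and b_j = <phi'_j, f>.  By Parseval,
   s_ij = Re (conj a_i <phi_i, phi'_j> b_j) is a signed coupling of the two
   power spectra: its row sums are |a_i|^2 and its column sums |b_j|^2.
   As (lam_i - lam'_j) <phi_i, phi'_j> = <phi_i, (H - H') phi'_j> has modulus
   at most ||H - H'||, we get |s_ij| |lam_i - lam'_j| <= ||H - H'|| (|a_i|^2 +
   |b_j|^2) / 2, and these bounds add up to n ||H - H'||.
   It remains to bound W1 by the cost sum_ij |s_ij| |x_i - y_j| of a signed
   coupling.  A negative entry s_ij is removed by adding m (e_i - a)(e_j - b)^T,
   where m = - s_ij and a, b are the normalised positive parts of column j and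
   row i: the marginals are unchanged, no new negative entry appears, and the
   cost does not increase since |x_l - y_k| <= |x_l - y_j| + |x_i - y_j| +
   |x_i - y_k|. *)

From HB Require Import structures.
From mathcomp Require Import all_boot all_order all_algebra.
From mathcomp Require Import all_classical all_reals all_analysis.
From mathcomp.real_closed Require Import complex.
From mathcomp Require Import measurable_realfun ring lra.

Set Implicit Arguments.
Unset Strict Implicit.
Unset Printing Implicit Defensive.

Import Order.TTheory GRing.Theory Num.Theory.
Local Open Scope ring_scope.

Lemma sum_delta_mull (R : pzSemiRingType) (I : finType) (i : I) (F : I -> R) :
  \sum_u (u == i)%:R * F u = F i.
Proof.
rewrite (bigD1 i) //= eqxx mul1r big1 ?addr0 // => u /negbTE ->; exact: mul0r.
Qed.

Lemma sum_delta (R : pzSemiRingType) (I : finType) (i : I) :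
  \sum_u (u == i)%:R = 1 :> R.
Proof. by rewrite (bigD1 i) //= eqxx big1 ?addr0 // => u /negbTE ->. Qed.

Lemma sum_funrpos_ge (R : realDomainType) (T : finType) (f : T -> R) t :
  f t <= 0 -> \sum_u f u - f t <= \sum_u f^\+ u.
Proof.
move=> ft0; rewrite (bigD1 t) //= [leRHS](bigD1 t) //= addrAC subrr add0r.
rewrite /funrpos (max_r ft0) add0r.
by apply: ler_sum => u _; rewrite le_max lexx.
Qed.

Lemma norm_shrink_pos (R : realFieldType) (x t : R) : 0 <= t <= 1 ->
  `|x - t * Num.max x 0| = `|x| - t * Num.max x 0.
Proof.
case/andP=> t0 t1; have [x0|x0] := leP 0 x; last by rewrite mulr0 !subr0.
by rewrite !ger0_norm //; nra.
Qed.

Lemma shrink_pos_ge_min (R : realFieldType) (x t : R) : 0 <= t <= 1 ->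
  Num.min x 0 <= x - t * Num.max x 0.
Proof.
case/andP=> t0 t1; have [x0|x0] := leP 0 x; last by rewrite mulr0 subr0.
nra.
Qed.

Section signed_plan.
Variables (R : realFieldType) (I J : finType) (c : I -> J -> R).

Definition plan_cost (s : I -> J -> R) := \sum_a \sum_b `|s a b| * c a b.

Definition negative_entries (s : I -> J -> R) :=
  [set q : I * J | s q.1 q.2 < 0].

Hypothesis c_ge0 : forall a b, 0 <= c a b.
Hypothesis c_zigzag : forall i l j k, c l k <= c l j + c i j + c i k.

Section rank_one_correction.
Variables (s : I -> J -> R) (i : I) (j : J).
Hypotheses (sij_lt0 : s i j < 0) (rows_ge0 : forall a, 0 <= \sum_b s a b)
  (cols_ge0 : forall b, 0 <= \sum_a s a b).

Let m := - s i j.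
Let P := \sum_v (s i)^\+ v.
Let Q := \sum_u (s^~ j)^\+ u.
Let a u := (s^~ j)^\+ u / Q.
Let b v := (s i)^\+ v / P.
Let s' u v := s u v + m * ((u == i)%:R - a u) * ((v == j)%:R - b v).

Let m_gt0 : 0 < m. Proof. by rewrite oppr_gt0. Qed.

Let m_le_P : m <= P.
Proof.
have := sum_funrpos_ge (ltW sij_lt0); have := rows_ge0 i; rewrite /m /P; lra.
Qed.

Let m_le_Q : m <= Q.
Proof.
have := sum_funrpos_ge (f := s^~ j) (ltW sij_lt0); have := cols_ge0 j.
rewrite /m /Q /=; lra.
Qed.

Let P_gt0 : 0 < P. Proof. exact: lt_le_trans m_gt0 m_le_P. Qed.
Let Q_gt0 : 0 < Q. Proof. exact: lt_le_trans m_gt0 m_le_Q. Qed.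

Let a_ge0 u : 0 <= a u. Proof. by rewrite divr_ge0 ?funrpos_ge0 ?ltW. Qed.
Let b_ge0 v : 0 <= b v. Proof. by rewrite divr_ge0 ?funrpos_ge0 ?ltW. Qed.

Let a_i : a i = 0.
Proof. by rewrite /a /funrpos (max_r (ltW sij_lt0)) mul0r. Qed.

Let b_j : b j = 0.
Proof. by rewrite /b /funrpos (max_r (ltW sij_lt0)) mul0r. Qed.

Let sum_a : \sum_u a u = 1. Proof. by rewrite -mulr_suml divff ?gt_eqF. Qed.
Let sum_b : \sum_v b v = 1. Proof. by rewrite -mulr_suml divff ?gt_eqF. Qed.

Let rows_s' u : \sum_v s' u v = \sum_v s u v.
Proof.
by rewrite big_split /= -mulr_sumr sumrB sum_delta sum_b subrr mulr0 addr0.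
Qed.

Let cols_s' v : \sum_u s' u v = \sum_u s u v.
Proof.
by rewrite big_split /= -mulr_suml -mulr_sumr sumrB sum_delta sum_a subrr
  mulr0 mul0r addr0.
Qed.

Let m_div_P : 0 <= m / P <= 1.
Proof.
by rewrite divr_ge0 ?(ltW m_gt0) ?(ltW P_gt0) // ler_pdivrMr // mul1r.
Qed.

Let m_div_Q : 0 <= m / Q <= 1.
Proof.
by rewrite divr_ge0 ?(ltW m_gt0) ?(ltW Q_gt0) // ler_pdivrMr // mul1r.
Qed.

Let s'_row_i v : v != j -> s' i v = s i v - m / P * Num.max (s i v) 0.
Proof.
move=> /negbTE vj; rewrite /s' /b /funrpos eqxx vj a_i subr0 sub0r mulr1.
by rewrite mulrN mulrA mulrAC.
Qed.

Let s'_col_j u : u != i -> s' u j = s u j - m / Q * Num.max (s u j) 0.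
Proof.
move=> /negbTE ui; rewrite /s' /a /funrpos eqxx ui b_j subr0 sub0r mulr1.
by rewrite mulrN mulrA mulrAC.
Qed.

Let s'_off u v : u != i -> v != j -> s' u v = s u v + m * a u * b v.
Proof.
by move=> /negbTE ui /negbTE vj; rewrite /s' ui vj !sub0r !mulrN mulNr opprK.
Qed.

Let mab_ge0 u v : 0 <= m * a u * b v.
Proof. exact: mulr_ge0 (mulr_ge0 (ltW m_gt0) (a_ge0 u)) (b_ge0 v). Qed.

Let s'_ij : s' i j = 0.
Proof. by rewrite /s' !eqxx a_i b_j !subr0 mulr1 mulr1 /m subrr. Qed.

Let s'_ge_min u v : Num.min (s u v) 0 <= s' u v.
Proof.
have [->|ui] := eqVneq u i; have [->|vj] := eqVneq v j.
- by rewrite s'_ij ge_min lexx orbT.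
- by rewrite s'_row_i // shrink_pos_ge_min.
- by rewrite s'_col_j // shrink_pos_ge_min.
by rewrite s'_off // ge_min lerDl mab_ge0.
Qed.

Let g u v := a u * b v - (u == i)%:R * (v == j)%:R - (u == i)%:R * b v
  - a u * (v == j)%:R.

Let norm_s'_le u v : `|s' u v| <= `|s u v| + m * g u v.
Proof.
rewrite /g; have [->|ui] := eqVneq u i; have [->|vj] := eqVneq v j.
- by rewrite s'_ij a_i b_j normr0 ltr0_norm // /m /=; lra.
- by rewrite s'_row_i // norm_shrink_pos // a_i /b /funrpos /=; lra.
- by rewrite s'_col_j // norm_shrink_pos // b_j /a /funrpos /=; lra.
rewrite s'_off // /= !mul0r !mulr0 !subr0 -mulrA.
have := mab_ge0 u v; rewrite -mulrA => mab.
by apply: le_trans (ler_normD _ _) _; rewrite (ger0_norm mab).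
Qed.

Let sum_g_cost : \sum_u \sum_v g u v * c u v <= 0.
Proof.
have -> : \sum_u \sum_v g u v * c u v =
    \sum_u \sum_v a u * b v * c u v
    - \sum_u \sum_v (u == i)%:R * ((v == j)%:R * c u v)
    - \sum_u \sum_v (u == i)%:R * (b v * c u v)
    - \sum_u \sum_v (v == j)%:R * (a u * c u v).
  rewrite -!sumrB; apply: eq_bigr => u _; rewrite -!sumrB.
  by apply: eq_bigr => v _; rewrite /g; ring.
have -> : \sum_u \sum_v (u == i)%:R * ((v == j)%:R * c u v) = c i j.
  by under eq_bigr do rewrite -mulr_sumr sum_delta_mull; rewrite sum_delta_mull.
have -> : \sum_u \sum_v (u == i)%:R * (b v * c u v) = \sum_v b v * c i v.
  by under eq_bigr do rewrite -mulr_sumr; rewrite sum_delta_mull.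
have -> : \sum_u \sum_v (v == j)%:R * (a u * c u v) = \sum_u a u * c u j.
  by under eq_bigr do rewrite sum_delta_mull.
have avg : \sum_u \sum_v a u * b v * c u v <=
    \sum_u \sum_v a u * c u j * b v + \sum_u \sum_v c i j * (a u * b v)
    + \sum_u \sum_v b v * c i v * a u.
  rewrite -!big_split; apply: ler_sum => u _; rewrite -!big_split /=.
  apply: ler_sum => v _.
  have := ler_wpM2l (mulr_ge0 (a_ge0 u) (b_ge0 v)) (c_zigzag i u j v); lra.
have avg_cuj : \sum_u \sum_v a u * c u j * b v = \sum_u a u * c u j.
  by apply: eq_bigr => u _; rewrite -mulr_sumr sum_b mulr1.
have avg_cij : \sum_u \sum_v c i j * (a u * b v) = c i j.
  under eq_bigr do rewrite -mulr_sumr.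
  by rewrite -mulr_sumr -big_distrlr /= sum_a sum_b !mulr1.
have avg_civ : \sum_u \sum_v b v * c i v * a u = \sum_v b v * c i v.
  rewrite exchange_big; apply: eq_bigr => v _.
  by rewrite -mulr_sumr sum_a mulr1.
move: avg; rewrite avg_cuj avg_cij avg_civ; lra.
Qed.

Let cost_s' : plan_cost s' <= plan_cost s.
Proof.
apply: (@le_trans _ _ (\sum_u \sum_v (`|s u v| + m * g u v) * c u v)).
  apply: ler_sum => u _; apply: ler_sum => v _.
  by rewrite ler_wpM2r ?norm_s'_le.
have : 0 <= m by exact: ltW.
under eq_bigr do under eq_bigr do rewrite mulrDl -mulrA.
rewrite /plan_cost; under eq_bigr do rewrite big_split /= -mulr_sumr.
rewrite big_split /= -mulr_sumr.
have := sum_g_cost; nra.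
Qed.

Lemma remove_negative_entry : exists s1 : I -> J -> R,
  [/\ forall u, \sum_v s1 u v = \sum_v s u v,
      forall v, \sum_u s1 u v = \sum_u s u v,
      negative_entries s1 \proper negative_entries s &
      plan_cost s1 <= plan_cost s].
Proof.
exists s'; split => //; apply/fintype.properP; split.
  apply/fintype.subsetP => -[u v]; rewrite !inE /= => neg.
  by have := le_lt_trans (s'_ge_min u v) neg; rewrite gt_min ltxx orbF.
by exists (i, j); rewrite !inE /= ?s'_ij ?ltxx.
Qed.

End rank_one_correction.

Lemma nonneg_plan_le_signed (s : I -> J -> R) :
  (forall a, 0 <= \sum_b s a b) -> (forall b, 0 <= \sum_a s a b) ->
  exists p : I -> J -> R,
  [/\ forall a b, 0 <= p a b,
      forall a, \sum_b p a b = \sum_b s a b,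
      forall b, \sum_a p a b = \sum_a s a b &
      plan_cost p <= plan_cost s].
Proof.
have [N] := ubnP #|negative_entries s|; elim: N s => // N IH s ltN rows cols.
have [neg0|[[i j]]] := set_0Vmem (negative_entries s).
  exists s; split => // a b; rewrite leNgt; apply/negP => sab.
  have : (a, b) \in negative_entries s by rewrite inE.
  by rewrite neg0 inE.
rewrite inE /= => sij.
have [s1 [rows1 cols1 lt_neg cost1]] := remove_negative_entry sij rows cols.
have [|||p [p_ge0 rowsp colsp costp]] := IH s1.
- by apply: leq_trans (proper_card lt_neg) _; rewrite -ltnS.
- by move=> a; rewrite rows1.
- by move=> b; rewrite cols1.
exists p; split => // [a | b |]; first by rewrite rowsp rows1.
  by rewrite colsp cols1.
exact: le_trans costp cost1.
Qed.

End signed_plan.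

Lemma abs_le_mean_of_sqr_le (R : realFieldType) (t d x y : R) :
  0 <= d -> 0 <= x -> 0 <= y -> t ^+ 2 <= d ^+ 2 * (x * y) ->
  `|t| <= d * (x + y) / 2.
Proof.
move=> d0 x0 y0 tle; have mean_ge0 : 0 <= d * (x + y) / 2.
  by rewrite divr_ge0 ?mulr_ge0 ?addr_ge0.
rewrite -ler_sqr ?nnegrE // real_normK ?num_real //; apply: le_trans tle _.
rewrite -subr_ge0.
have -> : (d * (x + y) / 2) ^+ 2 - d ^+ 2 * (x * y) = (d * (x - y)) ^+ 2 / 4.
  by field.
by rewrite divr_ge0 ?sqr_ge0.
Qed.

Section dirac_mixture.
Local Open Scope classical_set_scope.
Local Open Scope ereal_scope.
Context d (T : measurableType d) (R : realType) (I : finType).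
Variables (w : I -> {nonneg R}) (x : I -> T).

(* [msum] sums a [nat]-indexed sequence of measures: enumerate [I]. *)
Let dirac_seq (k : nat) : {measure set T -> \bar R} :=
  if @insub _ (fun k => k < #|I|)%N 'I_#|I| k is Some i then
    mscale (w (enum_val i)) \d_(x (enum_val i))
  else mzero.

Definition dirac_mixture (A : set T) : \bar R :=
  \sum_i (w i)%:num%:E * \d_(x i) A.

Let dirac_mixture_msum : dirac_mixture = msum dirac_seq #|I|.
Proof.
apply/funext => A; rewrite /msum /dirac_mixture (big_enum_val (fun i => _ * _)).
by apply: eq_bigr => k _; rewrite /dirac_seq valK.
Qed.

Let dirac_mixture0 : dirac_mixture set0 = 0.
Proof. by rewrite dirac_mixture_msum measure0. Qed.

Let dirac_mixture_ge0 A : 0 <= dirac_mixture A.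
Proof. by rewrite dirac_mixture_msum measure_ge0. Qed.

Let dirac_mixture_sigma_additive : semi_sigma_additive dirac_mixture.
Proof. rewrite dirac_mixture_msum; exact: measure_semi_sigma_additive. Qed.

HB.instance Definition _ := isMeasure.Build _ _ _ dirac_mixture
  dirac_mixture0 dirac_mixture_ge0 dirac_mixture_sigma_additive.

Lemma integral_dirac_mixture (f : T -> \bar R) :
  measurable_fun [set: T] f -> (forall t, 0 <= f t) ->
  \int[dirac_mixture]_t f t = \sum_i (w i)%:num%:E * f (x i).
Proof.
move=> mf f0; rewrite dirac_mixture_msum ge0_integral_measure_sum //.
rewrite (big_enum_val (fun i => _ * _)); apply: eq_bigr => k _.
rewrite /dirac_seq valK ge0_integral_mscale // integral_dirac //.
by rewrite diracT mul1e.
Qed.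

End dirac_mixture.

Section dirac_mixture_probability.
Context d (T : measurableType d) (R : realType) (I : finType).
Variables (w : I -> {nonneg R}) (x : I -> T).

Definition dirac_mixture_prob of \sum_i (w i)%:num = 1 := dirac_mixture w x.

Variable sum_w1 : \sum_i (w i)%:num = 1.

HB.instance Definition _ := Measure.on (dirac_mixture_prob sum_w1).

Let dirac_mixture_prob_setT : dirac_mixture_prob sum_w1 [set: T] = 1%E.
Proof.
rewrite /dirac_mixture_prob /dirac_mixture.
under eq_bigr do rewrite diracT mule1.
by rewrite sumEFin sum_w1.
Qed.

HB.instance Definition _ := Measure_isProbability.Build _ _ _
  (dirac_mixture_prob sum_w1) dirac_mixture_prob_setT.

End dirac_mixture_probability.

Section dirac_preimage.
Local Open Scope classical_set_scope.
Context d1 d2 (T1 : measurableType d1) (T2 : measurableType d2) (R : realType).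
Variables (u : T1) (v : T2).

Lemma dirac_preimage_fst (A : set T1) :
  \d_(u, v) (fst @^-1` A) = \d_u A :> \bar R.
Proof.
by rewrite !diracE; congr (_%:R%:E); apply/idP/idP => /set_mem; exact: mem_set.
Qed.

Lemma dirac_preimage_snd (B : set T2) :
  \d_(u, v) (snd @^-1` B) = \d_v B :> \bar R.
Proof.
by rewrite !diracE; congr (_%:R%:E); apply/idP/idP => /set_mem; exact: mem_set.
Qed.

End dirac_preimage.

Lemma W1_le_plan_cost (R : realType) (I J : finType) (x : I -> R) (y : J -> R)
    (w : I -> R) (w' : J -> R) (p : I -> J -> R) :
  (forall a b, 0 <= p a b) ->
  (forall a, \sum_b p a b = w a) -> (forall b, \sum_a p a b = w' b) ->
  \sum_a w a = 1 ->
  (W1 (fun A => \sum_a (w a)%:E * \d_(x a) A)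
      (fun A => \sum_b (w' b)%:E * \d_(y b) A)
   <= (\sum_a \sum_b p a b * `|x a - y b|)%:E)%E.
Proof.
move=> p_ge0 rows cols sum_w.
pose pw (q : I * J) : {nonneg R} := NngNum (p_ge0 q.1 q.2).
have sum_pw : \sum_q (pw q)%:num = 1.
  by rewrite -sum_w -pair_bigA /=; apply: eq_bigr => a _; rewrite rows.
pose P : probability (R * R)%type R :=
  dirac_mixture_prob (fun q => (x q.1, y q.2)) sum_pw.
have PE (B : set (R * R)) :
    P B = (\sum_a \sum_b (p a b)%:E * \d_(x a, y b) B)%E.
  by rewrite pair_bigA.
apply: (@le_trans _ _ (\int[P]_z (`|z.1 - z.2|)%:E)%E).
  apply: ereal_inf_lbound; exists P => // A mA; rewrite !PE; split.
  - apply: eq_bigr => a _; under eq_bigr do rewrite dirac_preimage_fst.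
    rewrite -ge0_sume_distrl; last by move=> b _; rewrite lee_fin.
    by rewrite sumEFin rows.
  - rewrite exchange_big; apply: eq_bigr => b _.
    under eq_bigr do rewrite dirac_preimage_snd.
    rewrite -ge0_sume_distrl; last by move=> a _; rewrite lee_fin.
    by rewrite sumEFin cols.
rewrite integral_dirac_mixture //; last first.
  apply/measurable_EFinP; apply: measurableT_comp => //.
  by apply: measurable_funB; [exact: measurable_fst | exact: measurable_snd].
by rewrite pair_bigA -sumEFin; apply: lee_sum => q _; rewrite -EFinM.
Qed.

Lemma W1_le_signed_plan_cost (R : realType) (I J : finType)
    (x : I -> R) (y : J -> R) (w : I -> R) (w' : J -> R) (s : I -> J -> R) :
  (forall a, \sum_b s a b = w a) -> (forall b, \sum_a s a b = w' b) ->
  (forall a, 0 <= w a) -> (forall b, 0 <= w' b) -> \sum_a w a = 1 ->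
  (W1 (fun A => \sum_a (w a)%:E * \d_(x a) A)
      (fun A => \sum_b (w' b)%:E * \d_(y b) A)
   <= (\sum_a \sum_b `|s a b| * `|x a - y b|)%:E)%E.
Proof.
move=> rows cols w_ge0 w'_ge0 sum_w.
have zigzag i l j k :
    `|x l - y k| <= `|x l - y j| + `|x i - y j| + `|x i - y k|.
  have -> : x l - y k = (x l - y j) - (x i - y j) + (x i - y k) by ring.
  by rewrite (le_trans (ler_normD _ _)) // lerD2r (le_trans (ler_normB _ _)).
have [||p [p_ge0 rowsp colsp costp]] :=
  nonneg_plan_le_signed (fun a b => normr_ge0 (x a - y b)) zigzag (s := s).
- by move=> a; rewrite rows.
- by move=> b; rewrite cols.
apply: le_trans (W1_le_plan_cost _ _ p_ge0 _ _ sum_w) _.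
- by move=> a; rewrite rowsp rows.
- by move=> b; rewrite colsp cols.
rewrite lee_fin; apply: le_trans costp.
apply: ler_sum => a _; apply: ler_sum => b _.
by rewrite (ger0_norm (p_ge0 a b)).
Qed.

Section complex_inner_product.
Variable R : realType.
Local Notation C := R[i].
Implicit Types (z : C) (n : nat).

Lemma cmod2_ge0 z : 0 <= cmod2 z.
Proof. by rewrite addr_ge0 ?sqr_ge0. Qed.

Lemma cmod2M z1 z2 : cmod2 (z1 * z2) = cmod2 z1 * cmod2 z2.
Proof. by case: z1 z2 => [a b] [c d]; rewrite /cmod2 /=; ring. Qed.

Lemma cmod2J z : cmod2 z^* = cmod2 z.
Proof. by case: z => a b; rewrite /cmod2 /= sqrrN. Qed.

Lemma mulJc z : z^* * z = (cmod2 z)%:C%C.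
Proof. by case: z => a b; rewrite /cmod2 /=; congr Complex; ring. Qed.

Lemma sqr_Re_le_cmod2 z : complex.Re z ^+ 2 <= cmod2 z.
Proof. by rewrite lerDl sqr_ge0. Qed.

Lemma Re_sum (I : finType) (F : I -> C) :
  complex.Re (\sum_i F i) = \sum_i complex.Re (F i).
Proof. by apply: big_morph => // -[a b] [c d]. Qed.

Lemma Re_realM (r : R) z : complex.Re (r%:C%C * z) = r * complex.Re z.
Proof. by case: z => a b /=; rewrite mul0r subr0. Qed.

Lemma sqr_normc z : Normc.normc z ^+ 2 = cmod2 z.
Proof. by case: z => a b; rewrite /= sqr_sqrtr // addr_ge0 ?sqr_ge0. Qed.

Lemma normc_sum (I : finType) (F : I -> C) :
  Normc.normc (\sum_i F i) <= \sum_i Normc.normc (F i).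
Proof.
elim/big_rec2: _ => [|i y z _ IH]; first by rewrite Normc.normc0.
by apply: le_trans (le_normcD _ _) _; rewrite lerD2l.
Qed.

Lemma conj_cdot n (u v : 'cV[C]_n) : (cdot u v)^* = cdot v u.
Proof.
rewrite /cdot rmorph_sum; apply: eq_bigr => k _.
by rewrite rmorphM /= conjCK mulrC.
Qed.

Lemma cdotZl n (u v : 'cV[C]_n) a : cdot (a *: u) v = a^* * cdot u v.
Proof.
by rewrite /cdot mulr_sumr; apply: eq_bigr => k _; rewrite mxE rmorphM mulrA.
Qed.

Lemma cdotZr n (u v : 'cV[C]_n) a : cdot u (a *: v) = a * cdot u v.
Proof.
by rewrite /cdot mulr_sumr; apply: eq_bigr => k _; rewrite mxE mulrCA.
Qed.

Lemma cdotBr n (u v w : 'cV[C]_n) : cdot u (v - w) = cdot u v - cdot u w.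
Proof. by rewrite /cdot -sumrB; apply: eq_bigr => k _; rewrite !mxE mulrBr. Qed.

Lemma vnorm_ge0 n (v : 'cV[C]_n) : 0 <= vnorm v.
Proof. exact: sqrtr_ge0. Qed.

Lemma sqr_vnorm n (v : 'cV[C]_n) : vnorm v ^+ 2 = \sum_k cmod2 (v k 0).
Proof. by rewrite sqr_sqrtr // sumr_ge0 // => k _; exact: cmod2_ge0. Qed.

Lemma cdotvv n (v : 'cV[C]_n) : cdot v v = (vnorm v ^+ 2)%:C%C.
Proof.
by rewrite sqr_vnorm /cdot rmorph_sum; apply: eq_bigr => k _; rewrite mulJc.
Qed.

Lemma hermitian_cdot n (H : 'M[C]_n) (u v : 'cV[C]_n) :
  H \is hermsymmx -> cdot u (H *m v) = cdot (H *m u) v.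
Proof.
move=> /is_hermitianmxP H_herm.
have HJ k l : H k l = (H l k)^* by rewrite {1}H_herm expr0 scale1r !mxE.
rewrite /cdot; under eq_bigr do rewrite mxE mulr_sumr.
under [RHS]eq_bigr do rewrite mxE rmorph_sum mulr_suml.
rewrite exchange_big /=; apply: eq_bigr => l _; apply: eq_bigr => k _.
by rewrite rmorphM /= -HJ mulrA [_ * H k l]mulrC.
Qed.

Definition orthonormal n (phi : 'I_n -> 'cV[C]_n) :=
  forall i j, cdot (phi i) (phi j) = (i == j)%:R.

Lemma orthonormal_completeness n (phi : 'I_n -> 'cV[C]_n) :
  orthonormal phi -> forall k l, \sum_i phi i k 0 * (phi i l 0)^* = (k == l)%:R.
Proof.
move=> on k l.
pose U : 'M[C]_n := \matrix_(k, i) phi i k 0.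
pose V : 'M[C]_n := \matrix_(i, k) (phi i k 0)^*.
have VU : V *m U = 1%:M.
  apply/matrixP => i j; rewrite !mxE -on.
  by apply: eq_bigr => k' _; rewrite !mxE.
have := congr1 (fun M : 'M[C]_n => M k l) (mulmx1C VU); rewrite !mxE => <-.
by apply: eq_bigr => i _; rewrite !mxE.
Qed.

Lemma parseval n (phi : 'I_n -> 'cV[C]_n) (u v : 'cV[C]_n) : orthonormal phi ->
  \sum_i cdot u (phi i) * cdot (phi i) v = cdot u v.
Proof.
move=> /orthonormal_completeness complete; rewrite /cdot.
under eq_bigr do rewrite mulr_suml; rewrite exchange_big /=.
apply: eq_bigr => k _.
under eq_bigr do rewrite mulr_sumr; rewrite exchange_big /=.
rewrite -[RHS](sum_delta_mull k (fun l => (u k 0)^* * v l 0)).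
apply: eq_bigr => l _; rewrite eq_sym -complete mulr_suml.
by apply: eq_bigr => i _; ring.
Qed.

Lemma parseval_norm n (phi : 'I_n -> 'cV[C]_n) (v : 'cV[C]_n) :
  orthonormal phi -> \sum_i cmod2 (cdot (phi i) v) = vnorm v ^+ 2.
Proof.
move=> on; apply: (@complexI R).
rewrite rmorph_sum /= -cdotvv -(parseval v v on).
by apply: eq_bigr => i _; rewrite -mulJc conj_cdot.
Qed.

Lemma orthonormal_vnorm n (phi : 'I_n -> 'cV[C]_n) i : orthonormal phi ->
  vnorm (phi i) = 1.
Proof.
move=> on; have /complexI sqr1 : (vnorm (phi i) ^+ 2)%:C%C = 1%:C%C.
  by rewrite -cdotvv on eqxx.
by rewrite /vnorm -sqr_vnorm sqr1 sqrtr1.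
Qed.

Lemma normc_ge0 z : 0 <= Normc.normc z.
Proof. by case: z => a b; exact: sqrtr_ge0. Qed.

Lemma normc_le1 n (v : 'cV[C]_n) k : vnorm v = 1 -> Normc.normc (v k 0) <= 1.
Proof.
move=> v1; have : Normc.normc (v k 0) ^+ 2 <= 1.
  rewrite sqr_normc -(expr1n _ 2) -v1 sqr_vnorm (bigD1 k) //= lerDl.
  by apply: sumr_ge0 => l _; exact: cmod2_ge0.
have := normc_ge0 (v k 0); nra.
Qed.

Lemma vnorm_le_opnorm n (A : 'M[C]_n) (v : 'cV[C]_n) : vnorm v = 1 ->
  vnorm (A *m v) <= opnorm A.
Proof.
move=> v1; apply: ub_le_sup; last by exists v.
exists (Num.sqrt (\sum_k (\sum_l Normc.normc (A k l)) ^+ 2)) => _ [w /= w1 <-].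
apply: ler_wsqrtr; apply: ler_sum => k _; rewrite -sqr_normc.
have sum_ge0 : 0 <= \sum_l Normc.normc (A k l).
  by apply: sumr_ge0 => l _; exact: normc_ge0.
rewrite lerXn2r ?nnegrE ?normc_ge0 // mxE.
apply: le_trans (normc_sum _) _; apply: ler_sum => l _.
by rewrite Normc.normcM ler_piMr ?normc_ge0 ?normc_le1.
Qed.

End complex_inner_product.

Section spectral_plan.
Variables (R : realType) (n : nat) (f : 'cV[R[i]]_n).
Variables (phi phi' : 'I_n -> 'cV[R[i]]_n).
Hypotheses (on : orthonormal phi) (on' : orthonormal phi').

Definition spectral_plan i j :=
  complex.Re ((cdot (phi i) f)^* * cdot (phi i) (phi' j) * cdot (phi' j) f).

Lemma spectral_plan_row i : \sum_j spectral_plan i j = cmod2 (cdot (phi i) f).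
Proof.
rewrite /spectral_plan -Re_sum; under eq_bigr do rewrite -mulrA.
by rewrite -mulr_sumr parseval // mulJc.
Qed.

Lemma spectral_plan_col j : \sum_i spectral_plan i j = cmod2 (cdot (phi' j) f).
Proof.
rewrite /spectral_plan -Re_sum -mulr_suml.
have -> : \sum_i (cdot (phi i) f)^* * cdot (phi i) (phi' j) =
    (cdot (phi' j) f)^*.
  rewrite conj_cdot -(parseval _ _ on).
  by apply: eq_bigr => i _; rewrite conj_cdot.
by rewrite mulJc.
Qed.

Variables (H H' : 'M[R[i]]_n) (lam lam' : 'I_n -> R).
Hypotheses (H_herm : H \is hermsymmx).
Hypotheses (eig : forall i, H *m phi i = Complex (lam i) 0 *: phi i).
Hypotheses (eig' : forall j, H' *m phi' j = Complex (lam' j) 0 *: phi' j).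

Lemma cdot_sub_eigen i j : cdot (phi i) ((H - H') *m phi' j) =
  (lam i - lam' j)%:C%C * cdot (phi i) (phi' j).
Proof.
rewrite mulmxBl cdotBr hermitian_cdot // eig eig' cdotZl cdotZr -mulrBl.
by congr (_ * _); apply/eqP; rewrite eq_complex /= oppr0 addr0 !eqxx.
Qed.

Lemma cmod2_cdot_sub_le i j :
  cmod2 (cdot (phi i) ((H - H') *m phi' j)) <= opnorm (H - H') ^+ 2.
Proof.
have vle := vnorm_le_opnorm (H - H') (orthonormal_vnorm j on').
have le_sqr : vnorm ((H - H') *m phi' j) ^+ 2 <= opnorm (H - H') ^+ 2.
  by rewrite lerXn2r ?nnegrE ?vnorm_ge0 // (le_trans (vnorm_ge0 _) vle).
apply: le_trans le_sqr; rewrite -(parseval_norm _ on) (bigD1 i) //= lerDl.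
by apply: sumr_ge0 => k _; exact: cmod2_ge0.
Qed.

Lemma spectral_plan_cost_le i j :
  `|spectral_plan i j| * `|lam i - lam' j| <=
  opnorm (H - H') * (cmod2 (cdot (phi i) f) + cmod2 (cdot (phi' j) f)) / 2.
Proof.
have d_ge0 : 0 <= opnorm (H - H').
  exact/(le_trans (vnorm_ge0 _))/vnorm_le_opnorm/(orthonormal_vnorm j on').
rewrite -normrM; apply: abs_le_mean_of_sqr_le; rewrite ?cmod2_ge0 //.
have -> : spectral_plan i j * (lam i - lam' j) = complex.Re
    ((cdot (phi i) f)^* * cdot (phi i) ((H - H') *m phi' j) * cdot (phi' j) f).
  by rewrite cdot_sub_eigen mulrCA -mulrA Re_realM mulrC.
apply: le_trans (sqr_Re_le_cmod2 _) _; rewrite !cmod2M cmod2J mulrAC mulrC.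
by rewrite ler_wpM2r ?mulr_ge0 ?cmod2_ge0 ?cmod2_cdot_sub_le.
Qed.

End spectral_plan.

Lemma sum_sum_add (R : zmodType) (I J : finType) (x : I -> R) (y : J -> R) :
  \sum_i \sum_j (x i + y j) = (\sum_i x i) *+ #|J| + (\sum_j y j) *+ #|I|.
Proof.
under eq_bigr do rewrite big_split /= sumr_const.
by rewrite big_split /= sumrMnl sumr_const.
Qed.

Theorem theorem3p1 (R : realType) (n : nat) (f : 'cV[R[i]]_n)
    (H H' : 'M[R[i]]_n)
    (phi : 'I_n -> 'cV[R[i]]_n) (lam : 'I_n -> R)
    (phi' : 'I_n -> 'cV[R[i]]_n) (lam' : 'I_n -> R) :
  (1 <= n)%N ->
  vnorm f = 1 ->
  H \is hermsymmx -> H' \is hermsymmx ->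
  orthonormal_eigenbasis H phi lam ->
  orthonormal_eigenbasis H' phi' lam' ->
  (W1 (power_spectrum f phi lam) (power_spectrum f phi' lam')
     <= (n%:R * opnorm (H - H'))%:E)%E.
Proof.
(* [1 <= n] follows from [vnorm f = 1]; only [H] needs to be Hermitian. *)
move=> _ f1 H_herm _ [on eig] [on' eig'].
have weights1 psi : orthonormal psi -> \sum_i cmod2 (cdot (psi i) f) = 1.
  by move=> on_psi; rewrite parseval_norm // f1 expr1n.
apply: le_trans (W1_le_signed_plan_cost lam lam' (spectral_plan_row f phi on')
  (spectral_plan_col f phi' on) (fun=> cmod2_ge0 _) (fun=> cmod2_ge0 _)
  (weights1 _ on)) _.
set d := opnorm (H - H'); rewrite lee_fin.
apply: le_trans (_ : _ <= \sum_i \sum_j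
    d * (cmod2 (cdot (phi i) f) + cmod2 (cdot (phi' j) f)) / 2) _.
  apply: ler_sum => i _; apply: ler_sum => j _; exact: spectral_plan_cost_le.
under eq_bigr do under eq_bigr do rewrite mulrAC.
under eq_bigr do rewrite -mulr_sumr.
rewrite -mulr_sumr sum_sum_add !weights1 // card_ord; lra.
Qed.
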